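(* Let $m\ge 2$ be an integer and $\alpha\in(0,1)$. There exists a nonzero finite Borel measure $\mu$ on $\mathbb{T}$ such that $\operatorname{ess\,sup}_{x} \Theta^{\alpha,*}(\mu,x)<\infty$, $\operatorname{ess\,inf}_{x}\Theta_{\alpha,*}(\mu,x)>0$ (essential supremum/infimum with respect to $\mu$), and $$\mathcal{C}(\mu,\alpha) \leq \frac{\lceil m^{\alpha}\rceil}{\lfloor m^{\alpha}\rfloor}.$$
   Context: Fix an integer $m\ge 2$ and let $\mathbb{T}=\{0,1,\dots,m-1\}^{\mathbb{N}}$ be the set of infinite sequences with entries in $\{0,\dots,m-1\}$. For distinct $a,b\in\mathbb{T}$ let $n(a,b)$ be the first index at which they differ and set $d(a,b)=m^{-n(a,b)+1}$ ($d(a,a)=0$). For an integer $n\ge0$ and $x\in\mathbb{T}$, $B_n(x)=B(x,m^{-n})$ is the set of sequences agreeing with $x$ in the first $n$ positions (an interval of level $n$). For a Borel measure $\mu$ on $\mathbb{T}$ and $\alpha>0$: $\Theta^{\alpha,*}(\mu,x)=\limsup_{n\to\infty} m^{\alpha n}\mu(B_n(x))$ and $\Theta_{\alpha,*}(\mu,x)=\liminf_{n\to\infty} m^{\alpha n}\mu(B_n(x))$. Define $\mathcal{C}(\mu,\alpha)=\dfrac{\operatorname{ess\,sup}_{x\in\mathbb{T}}\Theta^{\alpha,*}(\mu,x)}{\operatorname{ess\,inf}_{x\in\mathbb{T}}\Theta_{\alpha,*}(\mu,x)}$ (with respect to $\mu$) whenever the numerator is finite and the denominator positive. $\lfloor\cdot\rfloor,\lceil\cdot\rceil$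 denote floor and ceiling. *)

From HB Require Import structures.
From mathcomp Require Import all_boot all_order all_algebra.
From mathcomp Require Import all_classical all_reals all_analysis.
From mathcomp Require Import ess_sup_inf.
Set Implicit Arguments. Unset Strict Implicit. Unset Printing Implicit Defensive.
Import Order.TTheory GRing.Theory Num.Theory.
Import numFieldNormedType.Exports.
Local Open Scope classical_set_scope.
Local Open Scope ring_scope.

(* We use 'I_(m.-2.+2), which is literally 'I_m
   whenever m >= 2 (the only case used); the .-2.+2 makes the type
   nonempty for every m so that T is a pointedType, as required by
   the measure-theory library. *)
Definition digit (m : nat) := 'I_(m.-2.+2).
HB.instance Definition _ (m : nat) := Choice.copy (digit m) 'I_(m.-2.+2).
HB.instance Definition _ (m : nat) := isPointed.Build (digit m) ord0.

Notation seqT m := (nat -> digit m).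

Definition Bn (m : nat) (n : nat) (x : seqT m) : set (seqT m) :=
  [set y | forall i, (i < n)%N -> y i = x i].

(* Open sets for the metric d(a,b) = m^{-n(a,b)+1}: every point has a
   ball B_n(x) contained in the set (the balls of d are exactly the B_n). *)
Definition openT (m : nat) : set (set (seqT m)) :=
  [set U | forall x, U x -> exists n, Bn n x `<=` U].

Notation borelT m := (g_sigma_algebraType (@openT m)).

Local Open Scope ereal_scope.

Definition Theta_up {R : realType} (m : nat) (mu : set (borelT m) -> \bar R)
    (alpha : R) (x : borelT m) : \bar R :=
  limn_esup (fun n : nat => ((m%:R `^ (alpha * n%:R))%:E * mu (@Bn m n x))%E).

Definition Theta_low {R : realType} (m : nat) (mu : set (borelT m) -> \bar R)
    (alpha : R) (x : borelT m) : \bar R :=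
  limn_einf (fun n : nat => ((m%:R `^ (alpha * n%:R))%:E * mu (@Bn m n x))%E).

(* C(mu, alpha) = ess sup Theta^{alpha,*} / ess inf Theta_{alpha,*}
   (meaningful when the numerator is finite and the denominator positive). *)
Definition Cratio {R : realType} (m : nat)
    (mu : {measure set (borelT m) -> \bar R}) (alpha : R) : R :=
  (fine (ess_sup mu (Theta_up mu alpha)) / fine (ess_inf mu (Theta_low mu alpha)))%R.

From Pilot Require Import Defs.
From HB Require Import structures.
From mathcomp Require Import all_boot all_order all_algebra.
From mathcomp Require Import all_classical all_reals all_analysis.
From mathcomp Require Import ess_sup_inf.
From mathcomp Require Import zify ring lra.

(* With a := m^alpha, choose digit bases k_n in {floor a, ceil a} greedily so
   that P_n := k_0 * ... * k_(n-1) never drifts from a^n by more than a bounded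
   factor: floor(a) a^n <= a P_n <= ceil(a) a^n.  Expanding t in [0, 1) in the
   mixed radix (k_n) maps Lebesgue measure to a measure mu carried by the
   sequences with x_n < k_n, and the cylinder B_n(x) of such a sequence has
   mass exactly 1 / P_n.  Hence m^(alpha n) mu(B_n(x)) = a^n / P_n lies in
   [a / ceil a, a / floor a] for every n and mu-a.e. x, so both densities do
   too, and their ratio is at most ceil a / floor a. *)

Set Implicit Arguments.
Unset Strict Implicit.
Unset Printing Implicit Defensive.

Import Order.TTheory GRing.Theory Num.Theory.
Local Open Scope classical_set_scope.
Local Open Scope ring_scope.

Lemma euclidz_unique (k a b d e : int) : 0 < k -> 0 <= d < k -> 0 <= e < k ->
  k * a + d = k * b + e -> a = b /\ d = e.
Proof.
move=> k_gt0 /andP[d_ge0 d_ltk] /andP[e_ge0 e_ltk] eq_ab.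
case: (ltgtP a b) => [lt_ab|lt_ba|eq_ab']; last by subst; lia.
- have : k * (a + 1) <= k * b by rewrite ler_pM2l // lezD1.
  lia.
- have : k * (b + 1) <= k * a by rewrite ler_pM2l // lezD1.
  lia.
Qed.

Section MixedRadixExpansion.
Variables (R : realType) (m : nat) (k : nat -> nat).
Hypotheses (m_ge2 : (2 <= m)%N) (k_gt0 : forall i, (0 < k i)%N)
  (k_le_m : forall i, (k i <= m)%N).

Definition radix_prod n : nat := \prod_(i < n) k i.

(* Truncation of [t] to [n] mixed-radix digits, scaled to an integer. *)
Definition radix_floor n (t : R) : int := Num.floor ((radix_prod n)%:R * t).

Definition radix_digit n (t : R) : nat :=
  absz (radix_floor n.+1 t - (k n)%:Z * radix_floor n t)%R.

Definition expansion (t : R) : borelT m := fun n => inord (radix_digit n t).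

Definition admissible : set (seqT m) := [set x | forall i, (x i < k i)%N].

Fixpoint prefix_value (x : seqT m) n : int :=
  if n is n'.+1 then (k n')%:Z * prefix_value x n' + (x n' : nat)%:Z else 0.

Lemma radix_prodS n : radix_prod n.+1 = (radix_prod n * k n)%N.
Proof. by rewrite /radix_prod big_ord_recr. Qed.

Lemma radix_prod_gt0 n : (0 < radix_prod n)%N.
Proof. by rewrite /radix_prod prodn_gt0. Qed.

Lemma radix_prod_gt0R n : (0 : R) < (radix_prod n)%:R.
Proof. by rewrite ltr0n radix_prod_gt0. Qed.

Lemma radix_floorS n t :
  radix_floor n.+1 t = (k n)%:Z * radix_floor n t + (radix_digit n t)%:Z /\
  (radix_digit n t < k n)%N.
Proof.
rewrite /radix_digit /radix_floor radix_prodS natrM.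
set y := (radix_prod n)%:R * t.
have -> : (radix_prod n)%:R * (k n)%:R * t = (k n)%:R * y :> R
  by rewrite /y; ring.
set G := Num.floor y.
have kn_gt0 : (0 : R) < (k n)%:R by rewrite ltr0n.
have floor_ge : (k n)%:Z * G <= Num.floor ((k n)%:R * y).
  rewrite floor_ge_int intrM.
  by apply: ler_wpM2l; [exact: ltW | exact: floor_le].
have floor_lt : Num.floor ((k n)%:R * y) < (k n)%:Z * G + (k n)%:Z.
  rewrite floor_lt_int intrD intrM -[X in _ < _ + X]mulr1 -mulrDr ltr_pM2l //.
  by rewrite -[1]/(1%:~R) -intrD floorD1_gt.
set F := Num.floor _ in floor_ge floor_lt *.
have absE : (absz (F - (k n)%:Z * G)%R)%:Z = F - (k n)%:Z * G
  by rewrite gez0_abs; lia.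
by split; [rewrite absE | rewrite -ltz_nat absE]; lia.
Qed.

Lemma radix_floorS_inj n t s : radix_floor n.+1 t = radix_floor n.+1 s ->
  radix_floor n t = radix_floor n s /\ radix_digit n t = radix_digit n s.
Proof.
have [-> dt] := radix_floorS n t; have [-> ds] := radix_floorS n s.
have kn_gt0 := k_gt0 n.
by move=> /euclidz_unique[]; [lia | lia | lia | move=> -> [->]].
Qed.

Lemma radix_floor_eq_le i n t s : (i <= n)%N ->
  radix_floor n t = radix_floor n s -> radix_floor i t = radix_floor i s.
Proof.
move=> /subnKC <-; elim: (n - i)%N => [|j IHj]; first by rewrite addn0.
by rewrite addnS => /radix_floorS_inj[/IHj].
Qed.

Lemma expansionE n t : expansion t n = radix_digit n t :> nat.
Proof.
apply: inordK; have [_ /leq_trans] := radix_floorS n t; apply.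
by case: m m_ge2 (k_le_m n) => [|[|]].
Qed.

Lemma expansion_admissible t : admissible (expansion t).
Proof. by move=> i; rewrite expansionE; case: (radix_floorS i t). Qed.

Lemma expansion_agree n t s : radix_floor n t = radix_floor n s ->
  Bn n (expansion t) = Bn n (expansion s).
Proof.
move=> eq_ts; suff eq_pre i : (i < n)%N -> expansion t i = expansion s i.
  by rewrite predeqE => y /=; split=> yP i ltin; rewrite yP // eq_pre.
move=> ltin; apply: val_inj; rewrite /= !expansionE.
by case: (radix_floorS_inj (radix_floor_eq_le ltin eq_ts)).
Qed.

Lemma prefix_value_bound x n : admissible x ->
  0 <= prefix_value x n < (radix_prod n)%:Z.
Proof.
move=> xP; elim: n => [|n /andP[IH1 IH2]] /=.
  by rewrite /radix_prod big_ord0.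
have kn_gt0 := k_gt0 n; have xn_lt := xP n.
have : (k n)%:Z * prefix_value x n <= (k n)%:Z * ((radix_prod n)%:Z - 1)
  by rewrite ler_pM2l; lia.
have : 0 <= (k n)%:Z * prefix_value x n by apply: mulr_ge0; lia.
by rewrite radix_prodS PoszM mulrBr mulr1 [X in _ < X]mulrC; lia.
Qed.

Lemma radix_floor0 t : 0 <= t < 1 -> radix_floor 0 t = 0.
Proof.
move=> t01; apply/eqP.
by rewrite /radix_floor /radix_prod big_ord0 mul1r floor_eq.
Qed.

Lemma expansion_prefixE n x t : admissible x -> radix_floor 0 t = 0 ->
  (forall i, (i < n)%N -> expansion t i = x i) <->
  radix_floor n t = prefix_value x n.
Proof.
move=> xP t0; elim: n => [|n IH] /=; first by split.
have [-> dig_lt] := radix_floorS n t.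
split=> [eq_pre|].
  rewrite (proj1 IH) => [|i ltin]; last exact/eq_pre/ltnW.
  by rewrite -expansionE eq_pre.
have xn_lt := xP n; have kn_gt0 := k_gt0 n.
move=> /euclidz_unique[]; [lia | lia | lia |].
move=> /(proj2 IH) eq_pre eq_dig i.
rewrite ltnS leq_eqVlt => /orP[/eqP ->|]; last exact: eq_pre.
by apply: val_inj; rewrite /= expansionE; case: eq_dig.
Qed.

Lemma radix_floor_preimage n c : [set t : R | radix_floor n t = c] =
  `[c%:~R / (radix_prod n)%:R, (c + 1)%:~R / (radix_prod n)%:R[%classic.
Proof.
rewrite predeqE => t /=; rewrite in_itv /= ler_pdivrMr ?radix_prod_gt0R //.
rewrite ltr_pdivlMr ?radix_prod_gt0R // [t * _]mulrC /radix_floor.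
by split=> [<-|tP]; [exact: floor_itv | apply/eqP; rewrite floor_eq].
Qed.

Lemma expansion_preimage_Bn n x : admissible x ->
  expansion @^-1` Bn n x `&` `[0, 1[%classic =
  [set t : R | radix_floor n t = prefix_value x n].
Proof.
move=> xP; rewrite predeqE => t; split.
  move=> [tx]; rewrite /= in_itv /= => /radix_floor0 t0.
  exact: (proj1 (expansion_prefixE n xP t0)).
move=> eq_t; have /andP[x_ge0 x_lt] := prefix_value_bound n xP.
have t01 : 0 <= t < 1.
  have : [set t | radix_floor n t = prefix_value x n] t by [].
  rewrite radix_floor_preimage /= in_itv /=.
  move=> /andP[t_ge t_lt]; apply/andP; split.
    by apply: le_trans t_ge; rewrite divr_ge0 // ?ler0z // ltW ?radix_prod_gt0R.
  apply: (lt_le_trans t_lt); rewrite ler_pdivrMr ?radix_prod_gt0R // mul1r.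
  by rewrite -[(radix_prod n)%:R]/((radix_prod n)%:Z%:~R) ler_int; lia.
split; last by rewrite /= in_itv.
exact: (proj2 (expansion_prefixE n xP (radix_floor0 t01)) eq_t).
Qed.

Lemma measurable_expansion : measurable_fun setT expansion.
Proof.
apply: (@measurability _ _ R (borelT m) setT expansion (@Defs.openT m)) => //.
move=> _ [U oU <-]; rewrite setTI.
have -> : expansion @^-1` U = \bigcup_n \bigcup_(c : int)
    [set t | radix_floor n t = c /\ Bn n (expansion t) `<=` U].
  rewrite predeqE => t; split=> [/oU[n BnU]|[n _ [c _ [_ BnU]]]].
    by exists n => //; exists (radix_floor n t).
  exact: BnU.
apply: bigcupT_measurable => n; apply: countable_bigcupT_measurable => // c.
have [[t0 [t0c BnU]]|noU] :=
  pselect (exists t0, radix_floor n t0 = c /\ Bn n (expansion t0) `<=` U).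
  rewrite (_ : [set t | _ /\ _] = [set t | radix_floor n t = c]).
    by rewrite radix_floor_preimage; exact: measurable_itv.
  rewrite predeqE => t; split=> [[]//|tc]; split=> //.
  by rewrite (expansion_agree (etrans tc (esym t0c))).
rewrite (_ : [set t | _ /\ _] = set0) //.
by rewrite predeqE => t; split=> // tP; apply: noU; exists t.
Qed.

Lemma measurable_admissible : measurable (admissible : set (borelT m)).
Proof.
rewrite -[admissible]setCK; apply: measurableC.
apply: sub_sigma_algebra => x /= xN.
have [i xi] : exists i, ~ (x i < k i)%N.
  apply: contrapT => all_lt; apply: xN => i.
  by apply: contrapT => ?; apply: all_lt; exists i.
by exists i.+1 => y yx yP; apply: xi; rewrite -(yx i (ltnSn i)); exact: yP.
Qed.

Local Open Scope ereal_scope.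

Let lebesgue01 := mrestr (@lebesgue_measure R) (measurable_itv `[0%R, 1%R[).

(* [pushforward lebesgue01 expansion]; the library's measure instance on
   [pushforward] takes the measurability proof as an explicit argument. *)
Definition expansion_measure : {measure set (borelT m) -> \bar R} :=
  measure_function_pushforward__canonical__measure_function_Measure
    lebesgue01 measurable_expansion.

Lemma expansion_measureT : expansion_measure setT = 1.
Proof.
rewrite /= /pushforward preimage_setT /lebesgue01 /mrestr setTI.
by rewrite lebesgue_measure_itv /= lte_fin ltr01 oppr0 adde0.
Qed.

Lemma expansion_measure_Bn n x : admissible x ->
  expansion_measure (Bn n x) = ((radix_prod n)%:R^-1)%:E.
Proof.
move=> xP; rewrite /= /pushforward /lebesgue01 /mrestr expansion_preimage_Bn //.
rewrite radix_floor_preimage lebesgue_measure_itv /= lte_fin.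
rewrite ltr_pM2r ?invr_gt0 ?radix_prod_gt0R // ltr_int ltzD1 lexx -EFinB.
by rewrite intrD mulrDl addrAC subrr add0r mul1r.
Qed.

Lemma ae_admissible (P : borelT m -> Prop) :
  (forall x, admissible x -> P x) -> \forall x \ae expansion_measure, P x.
Proof.
move=> admP; exists (~` admissible); split.
- by apply: measurableC; exact: measurable_admissible.
- rewrite /= /pushforward (_ : _ @^-1` _ = set0) ?measure0 //.
  by rewrite predeqE => t; split=> // /=; apply; exact: expansion_admissible.
- by move=> x /= Px xP; apply/Px/admP.
Qed.

Variables (alpha : R) (lb ub : R).
Hypothesis density_bounds : forall n : nat,
  (lb <= m%:R `^ (alpha * n%:R) / (radix_prod n)%:R <= ub)%R.

Lemma Theta_up_expansion_le x : admissible x ->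
  Theta_up expansion_measure alpha x <= ub%:E.
Proof.
move=> xP; rewrite /Theta_up limn_esup_lim.
apply: lime_le; first exact: is_cvg_esups.
apply: nearW => n; apply: ge_ereal_sup => _ [j _ <-].
by rewrite expansion_measure_Bn // -EFinM lee_fin; case/andP: (density_bounds j).
Qed.

Lemma Theta_low_expansion_ge x : admissible x ->
  lb%:E <= Theta_low expansion_measure alpha x.
Proof.
move=> xP; rewrite /Theta_low limn_einf_lim.
apply: lime_ge; first exact: is_cvg_einfs.
apply: nearW => n; apply: le_ereal_inf_tmp => _ [j _ <-].
by rewrite expansion_measure_Bn // -EFinM lee_fin; case/andP: (density_bounds j).
Qed.

Lemma ess_sup_Theta_up_expansion :
  lb%:E <= ess_sup expansion_measure (Theta_up expansion_measure alpha) <= ub%:E.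
Proof.
apply/andP; split; last first.
  by apply/ess_supP/ae_admissible => x; exact: Theta_up_expansion_le.
apply: ess_sup_gee; first by rewrite expansion_measureT lte01.
apply: ae_admissible => x xP.
exact: le_trans (Theta_low_expansion_ge xP) (limn_einf_sup _).
Qed.

Lemma ess_inf_Theta_low_expansion :
  lb%:E <= ess_inf expansion_measure (Theta_low expansion_measure alpha) <= ub%:E.
Proof.
apply/andP; split.
  by apply/ess_infP/ae_admissible => x; exact: Theta_low_expansion_ge.
rewrite -(ess_inf_cst (mu := expansion_measure) ub%:E); last first.
  by rewrite expansion_measureT lte01.
apply/le_ess_inf/ae_admissible => x xP.
exact: le_trans (limn_einf_sup _) (Theta_up_expansion_le xP).
Qed.

End MixedRadixExpansion.

Section GreedyRadix.
Variables (R : realFieldType) (a : R) (lo hi : nat).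
Hypotheses (lo_gt0 : (0 < lo)%N) (lo_le_a : lo%:R <= a) (a_le_hi : a <= hi%:R).

Fixpoint greedy_prod n : nat :=
  if n is n'.+1 then
    (greedy_prod n' * (if ((greedy_prod n')%:R <= a ^+ n')%R then hi else lo))%N
  else 1%N.

Definition greedy_radix n : nat :=
  if (greedy_prod n)%:R <= a ^+ n then hi else lo.

Lemma radix_prod_greedy n : radix_prod greedy_radix n = greedy_prod n.
Proof.
elim: n => [|n IH]; first by rewrite /radix_prod big_ord0.
by rewrite radix_prodS IH.
Qed.

Lemma lo_le_hi : (lo <= hi)%N.
Proof. by rewrite -(ler_nat R); exact: le_trans lo_le_a a_le_hi. Qed.

Lemma greedy_radix_gt0 n : (0 < greedy_radix n)%N.
Proof.
by rewrite /greedy_radix; case: ifP => _ //; exact: leq_trans lo_le_hi.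
Qed.

Lemma greedy_radix_le n : (greedy_radix n <= hi)%N.
Proof. by rewrite /greedy_radix; case: ifP => _ //; exact: lo_le_hi. Qed.

Lemma greedy_prod_bound n :
  lo%:R * a ^+ n <= a * (greedy_prod n)%:R <= hi%:R * a ^+ n.
Proof.
have a_ge0 : 0 <= a by apply: le_trans lo_le_a.
elim: n => [|n /andP[IH1 IH2]]; first by rewrite /= !mulr1 lo_le_a a_le_hi.
rewrite /= natrM exprS.
set A := a ^+ n in IH1 IH2 *; set P := ((greedy_prod n)%:R : R) in IH1 IH2 *.
have P_ge0 : 0 <= P by rewrite ler0n.
have A_ge0 : 0 <= A by rewrite exprn_ge0.
have aP_ge0 : 0 <= a * P by rewrite mulr_ge0.
have lo_ge0 : 0 <= lo%:R :> R by rewrite ler0n.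
case: ifP => [P_le_A|/negbT]; last rewrite -ltNge => /ltW A_le_P.
- have := ler_wpM2l a_ge0 IH1; have := ler_wpM2r aP_ge0 a_le_hi.
  have := ler_wpM2l (mulr_ge0 (ler0n R hi) a_ge0) P_le_A.
  by move=> *; apply/andP; split; nra.
- have := ler_wpM2l a_ge0 IH2; have := ler_wpM2r aP_ge0 lo_le_a.
  have := ler_wpM2l (mulr_ge0 lo_ge0 a_ge0) A_le_P.
  by move=> *; apply/andP; split; nra.
Qed.

Lemma greedy_prod_ratio n :
  a / hi%:R <= a ^+ n / (greedy_prod n)%:R <= a / lo%:R.
Proof.
have lo_gt0R : 0 < lo%:R :> R by rewrite ltr0n.
have hi_gt0R : 0 < hi%:R :> R by rewrite ltr0n (leq_trans lo_gt0 lo_le_hi).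
have P_gt0 : 0 < (greedy_prod n)%:R :> R.
  rewrite -radix_prod_greedy ltr0n radix_prod_gt0 // => i.
  exact: greedy_radix_gt0.
have /andP[lo_le hi_ge] := greedy_prod_bound n.
apply/andP; split.
  by rewrite ler_pdivlMr // mulrAC ler_pdivrMr // [X in _ <= X]mulrC.
by rewrite ler_pdivrMr // mulrAC ler_pdivlMr // [X in X <= _]mulrC.
Qed.

End GreedyRadix.

Section FloorCeilRadix.
Variables (R : realType) (m : nat) (a : R).
Hypotheses (a_ge1 : 1 <= a) (a_le_m : a <= m%:R).

Let lo := `|Num.floor a|%N.
Let hi := `|Num.ceil a|%N.

Let loE : lo%:R = (Num.floor a)%:~R :> R.
Proof.
by rewrite -[LHS]/((_ %:Z)%:~R) gez0_abs // floor_ge0 (le_trans ler01).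
Qed.

Let hiE : hi%:R = (Num.ceil a)%:~R :> R.
Proof.
by rewrite -[LHS]/((_ %:Z)%:~R) gez0_abs // (le_trans _ (le_ceil a_ge1)) ?ceil1.
Qed.

Let lo_gt0 : (0 < lo)%N.
Proof. by rewrite -(ltr_nat R) loE ltr0z floor_gt0. Qed.

Let lo_le_a : lo%:R <= a.
Proof. by rewrite loE floor_le. Qed.

Let a_le_hi : a <= hi%:R.
Proof. by rewrite hiE ceil_ge. Qed.

Definition floor_ceil_radix : nat -> nat := greedy_radix a lo hi.

Lemma floor_ceil_radix_gt0 i : (0 < floor_ceil_radix i)%N.
Proof. exact: greedy_radix_gt0. Qed.

Lemma floor_ceil_radix_le i : (floor_ceil_radix i <= m)%N.
Proof.
apply: leq_trans (greedy_radix_le lo_le_a a_le_hi i) _.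
by rewrite -(ler_nat R) hiE -[m%:R]/(m%:Z%:~R) ler_int ceil_le_int.
Qed.

Lemma floor_ceil_radix_ratio n :
  a / (Num.ceil a)%:~R <= a ^+ n / (radix_prod floor_ceil_radix n)%:R <=
  a / (Num.floor a)%:~R.
Proof. by rewrite -loE -hiE radix_prod_greedy; exact: greedy_prod_ratio. Qed.

End FloorCeilRadix.

Lemma le_fine_ratio (R : realFieldType) (A B : R) (e1 e2 : \bar R) : 0 < A ->
  (A%:E <= e1 <= B%:E)%E -> (A%:E <= e2 <= B%:E)%E ->
  fine e1 / fine e2 <= B / A.
Proof.
move=> A_gt0; case: e1 e2 => [x||] [y||];
  rewrite ?leey ?leye_eq ?leeNy_eq ?lee_fin ?andbF //=.
move=> /andP[Ax xB] /andP[Ay yB].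
have y_gt0 : 0 < y by apply: lt_le_trans Ay.
by rewrite ler_pdivrMr // mulrAC ler_pdivlMr //; nra.
Qed.

Theorem theorem2 (R : realType) (m : nat) (alpha : R) :
  (2 <= m)%N -> 0 < alpha < 1 ->
  exists mu : {measure set (borelT m) -> \bar R},
    [/\ (0 < mu setT)%E, (mu setT < +oo)%E,
        (ess_sup mu (Theta_up mu alpha) < +oo)%E,
        (0 < ess_inf mu (Theta_low mu alpha))%E &
        Cratio mu alpha <=
          (Num.ceil (m%:R `^ alpha))%:~R / (Num.floor (m%:R `^ alpha))%:~R].
Proof.
move=> m_ge2 /andP[alpha_gt0 alpha_lt1].
set a := m%:R `^ alpha.
have m_ge1 : 1 <= m%:R :> R by rewrite ler1n ltnW.
have a_ge1 : 1 <= a by rewrite -(powRr0 m%:R) ler_powR // ltW.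
have a_le_m : a <= m%:R by rewrite ler1_powR // ltW.
have k_gt0 := floor_ceil_radix_gt0 a_ge1.
have k_le_m := floor_ceil_radix_le a_ge1 a_le_m.
have density n : a / (Num.ceil a)%:~R <=
    m%:R `^ (alpha * n%:R) / (radix_prod (floor_ceil_radix a) n)%:R <=
    a / (Num.floor a)%:~R.
  by rewrite powRrM powR_mulrn ?powR_ge0 //; exact: floor_ceil_radix_ratio.
exists (expansion_measure R m_ge2 k_gt0 k_le_m).
have sup_bounds := ess_sup_Theta_up_expansion m_ge2 k_gt0 k_le_m density.
have inf_bounds := ess_inf_Theta_low_expansion m_ge2 k_gt0 k_le_m density.
have a_gt0 : 0 < a := lt_le_trans ltr01 a_ge1.
have floor_a_gt0 : 0 < (Num.floor a)%:~R :> R by rewrite ltr0z floor_gt0.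
have ceil_a_gt0 : 0 < (Num.ceil a)%:~R :> R by rewrite (lt_le_trans a_gt0) ?ceil_ge.
have lb_gt0 : 0 < a / (Num.ceil a)%:~R by rewrite divr_gt0.
split; rewrite ?expansion_measureT ?lte01 ?ltry //.
- by case/andP: sup_bounds => _ /le_lt_trans; apply; rewrite ltry.
- by case/andP: inf_bounds => + _; apply: lt_le_trans; rewrite lte_fin.
- apply: le_trans (le_fine_ratio lb_gt0 sup_bounds inf_bounds) _.
  have -> : a / (Num.floor a)%:~R / (a / (Num.ceil a)%:~R) =
      (Num.ceil a)%:~R / (Num.floor a)%:~R by field; rewrite !gt_eqF.
  exact: lexx.
Qed.
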